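(* Let $(G,E)$ be a connected simple graph and $d,\rho$ metrics on $G$ such that $d$ is quasisymmetric to $\rho$. If $d$ fits to $(G,E)$, then $\rho$ fits to $(G,E)$.
   Context: $d$ is quasisymmetric to $\rho$ if there is a homeomorphism $\theta:[0,\infty)\to[0,\infty)$ with $\rho(x,y)/\rho(x,z)\le\theta(d(x,y)/d(x,z))$ for all $x,y,z$ with $x\ne z$. A metric $d$ fits to $(G,E)$ if (F1) there is $C>0$ with $d(x,y)\le Cd(x,z)$ for all $x,y,z$ with $x\sim y$ and $x\ne z$; and (F2) for every $\epsilon>0$ there exist $r>0$, $n\ge1$ and $x_0,\dots,x_n\in G$ with $x_i\in B_d(x_0,r)$ for $i\in[0,n-1]$, $x_n\notin B_d(x_0,r)$, and $d(x_i,x_{i-1})\le\epsilon r$, $x_i\sim x_{i-1}$ for $i\in[1,n]$. *)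

From Stdlib Require Import Reals Relations.
Open Scope R_scope.

Definition is_metric {V : Type} (d : V -> V -> R) : Prop :=
  (forall x y, 0 <= d x y) /\
  (forall x y, d x y = 0 <-> x = y) /\
  (forall x y, d x y = d y x) /\
  (forall x y z, d x z <= d x y + d y z).

Definition simple_graph {V : Type} (E : V -> V -> Prop) : Prop :=
  (forall x y, E x y -> E y x) /\ (forall x, ~ E x x).

Definition connected_graph {V : Type} (E : V -> V -> Prop) : Prop :=
  forall x y : V, clos_refl_trans V E x y.

Definition cont_on_nonneg (f : R -> R) : Prop :=
  forall x, 0 <= x -> forall eps, 0 < eps -> exists delta, 0 < delta /\
    forall y, 0 <= y -> Rabs (y - x) < delta -> Rabs (f y - f x) < eps.

Definition homeo_nonneg (theta : R -> R) : Prop :=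
  exists g : R -> R,
    (forall x, 0 <= x -> 0 <= theta x) /\
    (forall y, 0 <= y -> 0 <= g y) /\
    (forall x, 0 <= x -> g (theta x) = x) /\
    (forall y, 0 <= y -> theta (g y) = y) /\
    cont_on_nonneg theta /\ cont_on_nonneg g.

Definition quasisymmetric {V : Type} (d rho : V -> V -> R) : Prop :=
  exists theta : R -> R, homeo_nonneg theta /\
    forall x y z : V, x <> z ->
      rho x y / rho x z <= theta (d x y / d x z).

Definition ball_d {V : Type} (d : V -> V -> R) (x : V) (r : R) (y : V) : Prop :=
  d x y < r.

Definition fits {V : Type} (d : V -> V -> R) (E : V -> V -> Prop) : Prop :=
  (exists C, 0 < C /\ forall x y z : V, E x y -> x <> z -> d x y <= C * d x z) /\
  (forall eps, 0 < eps -> exists (r : R) (n : nat) (xs : nat -> V),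
      0 < r /\ (1 <= n)%nat /\
      (forall i, (i <= n - 1)%nat -> ball_d d (xs 0%nat) r (xs i)) /\
      ~ ball_d d (xs 0%nat) r (xs n) /\
      (forall i, (1 <= i <= n)%nat ->
         d (xs i) (xs (i - 1)%nat) <= eps * r /\ E (xs i) (xs (i - 1)%nat))).

(** The control function [theta] is a homeomorphism of [[0,oo)], so [theta 0 = 0]
    and [theta] is bounded on every [[0, C]]; the latter transfers (F1) directly.
    For (F2), pick [delta] with [theta < eps/2] on [[0, delta)] and a [d]-chain
    with steps [<= delta r / 4] leaving [B_d(x0, r)]. Stopping it at the first
    index [m] maximising [rho(x0, x_j)] gives a chain leaving [B_rho(x0, r')],
    [r' = rho(x0, x_m)]. Each [x_i] is at [d]-distance [>= r/2] from [x0] or from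
    the last point [z], so [d(x_i, x_(i-1)) / d(x_i, z) < delta] and quasisymmetry
    gives [rho(x_i, x_(i-1)) <= (eps/2) rho(x_i, z) <= eps r']. *)

From Stdlib Require Import Reals Lra Lia.
Open Scope R_scope.

Lemma Rle_mult_of_div_le a b c : 0 < b -> a / b <= c -> a <= c * b.
Proof.
  intros Hb H. replace a with (a / b * b) by (field; lra).
  apply Rmult_le_compat_r; lra.
Qed.

Lemma Rdiv_le_of_le_mult a b c : 0 < b -> a <= c * b -> a / b <= c.
Proof.
  intros Hb H. apply (Rmult_le_reg_r b); [exact Hb|].
  replace (a / b * b) with a by (field; lra). exact H.
Qed.

Lemma Rdiv_lt_of_lt_mult a b c : 0 < b -> a < c * b -> a / b < c.
Proof.
  intros Hb H. apply (Rmult_lt_reg_r b); [exact Hb|].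
  replace (a / b * b) with a by (field; lra). exact H.
Qed.

Lemma exists_first_argmax (f : nat -> R) (n : nat) :
  exists k, (k <= n)%nat /\ (forall j, (j <= n)%nat -> f j <= f k) /\
            (forall j, (j < k)%nat -> f j < f k).
Proof.
  induction n as [|n [k [Hkn [Hmax Hfirst]]]].
  - exists 0%nat. repeat split; [lia| |lia].
    intros j Hj. replace j with 0%nat by lia. lra.
  - destruct (Rlt_le_dec (f k) (f (S n))) as [Hlt|Hge].
    + exists (S n). repeat split; [lia| |].
      * intros j Hj. destruct (Nat.eq_dec j (S n)) as [->|]; [lra|].
        specialize (Hmax j ltac:(lia)). lra.
      * intros j Hj. specialize (Hmax j ltac:(lia)). lra.
    + exists k. repeat split; [lia| |exact Hfirst].
      intros j Hj. destruct (Nat.eq_dec j (S n)) as [->|]; [exact Hge|].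
      apply Hmax; lia.
Qed.

Definition extend_nonneg (f : R -> R) (t : R) : R := f (Rmax 0 t).

Lemma extend_nonneg_eq f t : 0 <= t -> extend_nonneg f t = f t.
Proof. intros Ht. unfold extend_nonneg. rewrite Rmax_right; auto. Qed.

Lemma Rabs_Rmax0_le x y : Rabs (Rmax 0 y - Rmax 0 x) <= Rabs (y - x).
Proof.
  unfold Rmax. destruct (Rle_dec 0 y), (Rle_dec 0 x); unfold Rabs;
  repeat match goal with |- context [Rcase_abs ?a] => destruct (Rcase_abs a) end; lra.
Qed.

Lemma continuity_extend_nonneg f : cont_on_nonneg f -> continuity (extend_nonneg f).
Proof.
  intros Hc x eps Heps.
  destruct (Hc (Rmax 0 x) (Rmax_l 0 x) eps Heps) as [delta [Hdelta Hclose]].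
  exists delta. split; [exact Hdelta|].
  intros y [_ Hy]. apply Hclose; [apply Rmax_l|].
  eapply Rle_lt_trans; [apply Rabs_Rmax0_le|exact Hy].
Qed.

Lemma cont_on_nonneg_IVT f a b y :
  cont_on_nonneg f -> 0 <= a -> 0 <= b -> (f a - y) * (f b - y) <= 0 ->
  exists z, Rmin a b <= z /\ f z = y.
Proof.
  intros Hc Ha Hb Hsign.
  assert (Hcont : continuity (fun t => extend_nonneg f t - y)).
  { apply continuity_minus; [now apply continuity_extend_nonneg|].
    apply continuity_const. now intros ? ?. }
  destruct (Rle_dec a b) as [Hab|Hba].
  - destruct (IVT_cor _ a b Hcont Hab) as [z [[Haz Hzb] Hz]].
    { rewrite !extend_nonneg_eq by lra. exact Hsign. }
    exists z. rewrite extend_nonneg_eq in Hz by lra.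
    split; [rewrite Rmin_left|]; lra.
  - destruct (IVT_cor _ b a Hcont ltac:(lra)) as [z [[Hbz Hza] Hz]].
    { rewrite !extend_nonneg_eq by lra. lra. }
    exists z. rewrite extend_nonneg_eq in Hz by lra.
    split; [rewrite Rmin_right|]; lra.
Qed.

Lemma cont_on_nonneg_bounded f C :
  cont_on_nonneg f -> 0 <= C -> exists M, forall q, 0 <= q <= C -> f q <= M.
Proof.
  intros Hc HC.
  destruct (continuity_ab_maj (extend_nonneg f) 0 C HC
              (fun c _ => continuity_extend_nonneg f Hc c)) as [q0 [Hq0 _]].
  exists (extend_nonneg f q0). intros q Hq.
  rewrite <- extend_nonneg_eq by lra. now apply Hq0.
Qed.

(** Both [theta b = 0] and [theta p = 2 theta 0] are attained at positive
    points, so by the intermediate value theorem so is [theta 0]: injectivity fails. *)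
Lemma homeo_nonneg_0 theta : homeo_nonneg theta -> theta 0 = 0.
Proof.
  intros [g [Hth [Hg [Hgth [Hthg [Hc _]]]]]].
  destruct (Rle_lt_or_eq_dec 0 (theta 0) (Hth 0 (Rle_refl 0))) as [Hpos|]; [|auto].
  exfalso.
  set (b := g 0). set (p := g (2 * theta 0)).
  assert (Hthb : theta b = 0) by (apply Hthg; lra).
  assert (Hthp : theta p = 2 * theta 0) by (apply Hthg; lra).
  assert (Hb : 0 < b).
  { destruct (Rle_lt_or_eq_dec 0 b (Hg 0 (Rle_refl 0))) as [|Hb0]; [auto|].
    rewrite <- Hb0 in Hthb. lra. }
  assert (Hp : 0 < p).
  { destruct (Rle_lt_or_eq_dec 0 p (Hg (2 * theta 0) ltac:(lra))) as [|Hp0]; [auto|].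
    rewrite <- Hp0 in Hthp. lra. }
  destruct (cont_on_nonneg_IVT theta b p (theta 0) Hc ltac:(lra) ltac:(lra))
    as [z [Hz Hthz]].
  { rewrite Hthb, Hthp. nra. }
  assert (Hmin : 0 < Rmin b p) by (now apply Rmin_glb_lt).
  assert (Hz0 : z = 0).
  { rewrite <- (Hgth z), <- (Hgth 0) by lra. now rewrite Hthz. }
  lra.
Qed.

Lemma homeo_nonneg_small theta eps :
  homeo_nonneg theta -> 0 < eps ->
  exists delta, 0 < delta /\ forall q, 0 <= q < delta -> theta q < eps.
Proof.
  intros Hh Heps. assert (Hth0 := homeo_nonneg_0 theta Hh).
  destruct Hh as [_ [_ [_ [_ [_ [Hc _]]]]]].
  destruct (Hc 0 (Rle_refl 0) eps Heps) as [delta [Hdelta Hclose]].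
  exists delta. split; [exact Hdelta|]. intros q Hq.
  specialize (Hclose q (proj1 Hq) ltac:(rewrite Rminus_0_r, Rabs_right; lra)).
  rewrite Hth0, Rminus_0_r in Hclose. now apply Rabs_def2 in Hclose.
Qed.

Lemma homeo_nonneg_bounded theta C :
  homeo_nonneg theta -> 0 <= C -> exists M, forall q, 0 <= q <= C -> theta q <= M.
Proof.
  intros [g [_ [_ [_ [_ [Hc _]]]]]]. now apply cont_on_nonneg_bounded.
Qed.

Section Metric.
Variables (V : Type) (d : V -> V -> R).
Hypothesis Hd : is_metric d.

Lemma metric_refl x : d x x = 0.
Proof. now apply Hd. Qed.

Lemma metric_pos x y : x <> y -> 0 < d x y.
Proof.
  intros Hxy. destruct Hd as [Hnn [Hsep _]].
  destruct (Rle_lt_or_eq_dec _ _ (Hnn x y)) as [|Hxy0]; [auto|].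
  exfalso. apply Hxy, Hsep. auto.
Qed.

Lemma metric_far_from_endpoint r a b w :
  r <= d a b -> r / 2 <= d w a \/ r / 2 <= d w b.
Proof.
  intros Hab. destruct Hd as [_ [_ [Hsym Htri]]].
  assert (Ht := Htri a w b). rewrite (Hsym a w) in Ht.
  destruct (Rle_dec (r / 2) (d w a)); [left|right]; lra.
Qed.

End Metric.

Section Quasisymmetry.
Variables (V : Type) (E : V -> V -> Prop) (d rho : V -> V -> R) (theta : R -> R).
Hypotheses (Hd : is_metric d) (Hrho : is_metric rho) (Htheta : homeo_nonneg theta).
Hypothesis Hqs : forall x y z, x <> z -> rho x y / rho x z <= theta (d x y / d x z).

Lemma qs_le x y z K :
  x <> z -> theta (d x y / d x z) <= K -> rho x y <= K * rho x z.
Proof.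
  intros Hxz HK. apply Rle_mult_of_div_le; [now apply metric_pos|].
  eapply Rle_trans; [apply Hqs|]; assumption.
Qed.

Lemma qs_step_le K delta r a b w w' :
  (forall q, 0 <= q < delta -> theta q <= K) ->
  0 < r -> r <= d a b -> d w w' < delta * (r / 2) ->
  rho w w' <= K * Rmax (rho w a) (rho w b).
Proof.
  intros Hsmall Hr Hab Hstep.
  assert (Hdelta : 0 < delta).
  { assert (0 <= d w w') by apply Hd. nra. }
  assert (Hfar : exists z, (z = a \/ z = b) /\ r / 2 <= d w z).
  { destruct (metric_far_from_endpoint V d Hd r a b w Hab); eauto. }
  destruct Hfar as [z [Hz Hwz]].
  assert (Hwz0 : w <> z) by (intros ->; rewrite metric_refl in Hwz; auto; lra).
  assert (HK : 0 <= K).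
  { rewrite <- (homeo_nonneg_0 theta Htheta). apply Hsmall. lra. }
  assert (Hratio : 0 <= d w w' / d w z < delta).
  { split.
    - apply Rle_mult_inv_pos; [apply Hd|lra].
    - apply Rdiv_lt_of_lt_mult; nra. }
  eapply Rle_trans; [apply (qs_le w w' z K Hwz0); now apply Hsmall|].
  apply Rmult_le_compat_l; [exact HK|].
  destruct Hz as [-> | ->]; [apply Rmax_l|apply Rmax_r].
Qed.

Lemma fits_F1_qs :
  (exists C, 0 < C /\ forall x y z, E x y -> x <> z -> d x y <= C * d x z) ->
  exists C, 0 < C /\ forall x y z, E x y -> x <> z -> rho x y <= C * rho x z.
Proof.
  intros [C [HC HF1]].
  destruct (homeo_nonneg_bounded theta C Htheta ltac:(lra)) as [M HM].
  exists (Rmax M 1). split; [eapply Rlt_le_trans; [|apply Rmax_r]; lra|].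
  intros x y z Hxy Hxz. apply qs_le; [exact Hxz|].
  eapply Rle_trans; [|apply Rmax_l]. apply HM. split.
  - apply Rle_mult_inv_pos; [apply Hd|now apply metric_pos].
  - apply Rdiv_le_of_le_mult; [now apply metric_pos|auto].
Qed.

Lemma fits_F2_qs :
  (forall eps, 0 < eps -> exists (r : R) (n : nat) (xs : nat -> V),
      0 < r /\ (1 <= n)%nat /\
      (forall i, (i <= n - 1)%nat -> ball_d d (xs 0%nat) r (xs i)) /\
      ~ ball_d d (xs 0%nat) r (xs n) /\
      (forall i, (1 <= i <= n)%nat ->
         d (xs i) (xs (i - 1)%nat) <= eps * r /\ E (xs i) (xs (i - 1)%nat))) ->
  forall eps, 0 < eps -> exists (r : R) (n : nat) (xs : nat -> V),
      0 < r /\ (1 <= n)%nat /\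
      (forall i, (i <= n - 1)%nat -> ball_d rho (xs 0%nat) r (xs i)) /\
      ~ ball_d rho (xs 0%nat) r (xs n) /\
      (forall i, (1 <= i <= n)%nat ->
         rho (xs i) (xs (i - 1)%nat) <= eps * r /\ E (xs i) (xs (i - 1)%nat)).
Proof.
  intros HF2 eps Heps.
  destruct (homeo_nonneg_small theta (eps / 2) Htheta ltac:(lra))
    as [delta [Hdelta Hsmall]].
  destruct (HF2 (delta / 4) ltac:(lra)) as [r [n [xs [Hr [_ [_ [Hout Hstep]]]]]]].
  unfold ball_d in *.
  set (x0 := xs 0%nat) in *.
  set (f := fun j => rho x0 (xs j)).
  destruct (exists_first_argmax f n) as [m [Hmn [Hmax Hfirst]]].
  assert (Hf0 : f 0%nat = 0) by apply metric_refl, Hrho.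
  assert (Hm : (1 <= m)%nat).
  { destruct m as [|m]; [exfalso|lia].
    assert (Hxn : x0 = xs n).
    { apply Hrho. specialize (Hmax n (le_n n)). assert (0 <= f n) by apply Hrho.
      unfold f in *. lra. }
    rewrite <- Hxn, metric_refl in Hout by exact Hd. lra. }
  assert (Hfm : 0 < f m) by (specialize (Hfirst 0%nat ltac:(lia)); lra).
  exists (f m), m, xs.
  split; [exact Hfm|]. split; [exact Hm|].
  split; [intros i Hi; apply Hfirst; lia|].
  split; [apply Rlt_irrefl|].
  intros i Hi. destruct (Hstep i ltac:(lia)) as [Hdi HE]. split; [|exact HE].
  assert (Hfar : rho (xs i) x0 <= f m /\ rho (xs i) (xs n) <= 2 * f m).
  { destruct Hrho as [_ [_ [Hsym Htri]]].
    assert (Hfi := Hmax i ltac:(lia)). assert (Hfn := Hmax n (le_n n)).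
    unfold f in *. rewrite Hsym in Hfi.
    assert (Ht := Htri (xs i) x0 (xs n)). split; lra. }
  apply Rle_trans with (eps / 2 * Rmax (rho (xs i) x0) (rho (xs i) (xs n))).
  - apply (qs_step_le (eps / 2) delta r x0 (xs n)); [|exact Hr|lra|nra].
    intros q Hq. left. now apply Hsmall.
  - assert (Rmax (rho (xs i) x0) (rho (xs i) (xs n)) <= 2 * f m)
      by (apply Rmax_lub; lra).
    nra.
Qed.

End Quasisymmetry.

Theorem lemma4p1 (V : Type) (E : V -> V -> Prop) (d rho : V -> V -> R) :
  simple_graph E -> connected_graph E ->
  is_metric d -> is_metric rho ->
  quasisymmetric d rho ->
  fits d E -> fits rho E.
Proof.
  intros _ _ Hd Hrho [theta [Htheta Hqs]] [HF1 HF2].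
  split.
  - exact (fits_F1_qs V E d rho theta Hd Hrho Htheta Hqs HF1).
  - exact (fits_F2_qs V E d rho theta Hd Hrho Htheta Hqs HF2).
Qed.
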